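(* Let $(P_n)_{n\in\mathbb{Z}}$ be the Padovan sequence. For every $a\in\mathbb{Z}$ let $\rho_a=3P_{a-2}-P_{a-4}$ and $\sigma_a=-\rho_{-a}$. Then for all integers $a,n$ with $a<n$, $$P_n=\rho_a P_{n-a}+\sigma_a P_{n-2a}+P_{n-3a}.$$
   Context: The Padovan sequence is defined by $P_0=P_1=P_2=1$ and $P_{n+3}=P_{n+1}+P_n$, extended to negative indices via $P_n=P_{n+3}-P_{n+1}$. *)

From Stdlib Require Import ZArith Lia.
Open Scope Z_scope.

(* Forward window: padF k = (P_k, P_{k+1}, P_{k+2}) for k : nat,
   using P_{n+3} = P_{n+1} + P_n. *)
Fixpoint padF (k : nat) : Z * Z * Z :=
  match k with
  | O => (1, 1, 1)
  | S k' => let '(a, b, c) := padF k' in (b, c, a + b)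
  end.

(* Backward window: padB k = (P_{-k}, P_{-k+1}, P_{-k+2}) for k : nat,
   using P_n = P_{n+3} - P_{n+1}. *)
Fixpoint padB (k : nat) : Z * Z * Z :=
  match k with
  | O => (1, 1, 1)
  | S k' => let '(a, b, c) := padB k' in (c - a, a, b)
  end.

Definition padovan (n : Z) : Z :=
  if 0 <=? n then fst (fst (padF (Z.to_nat n)))
  else fst (fst (padB (Z.to_nat (- n)))).

Definition rho (a : Z) : Z := 3 * padovan (a - 2) - padovan (a - 4).
Definition sigma (a : Z) : Z := - rho (- a).

Example padovan_ex : List.map padovan (-6 :: -5 :: -4 :: -3 :: -2 :: -1 :: 0 :: 1 :: 2 :: 3 :: 4 :: 5 :: 6 :: nil)%list
  = (-1 :: 1 :: 0 :: 0 :: 1 :: 0 :: 1 :: 1 :: 1 :: 2 :: 2 :: 3 :: 4 :: nil)%list.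
Proof. reflexivity. Qed.

(* In the ring Z[θ] = Z[x]/(x^3 - x - 1), written in the basis 1, θ, θ^2, the
   powers θ^n are (P_{n-5}, P_{n-3}, P_{n-4}), and the coefficient sum maps θ^n
   to P_n.  By Cayley-Hamilton for multiplication by y = θ^a, the cube y^3 equals
   Tr(y) y^2 - Tr(adj y) y + N(y).  Here Tr(θ^a) = ρ_a, N(θ^a) = 1, and adj y is
   the inverse θ^-a, so Tr(adj y) = ρ_{-a} = -σ_a.  Multiplying by θ^(n-3a) and
   taking coefficient sums gives the identity, for all integers a and n. *)

From Stdlib Require Import ZArith Lia.
Open Scope Z_scope.

Lemma padovan_of_nat (k : nat) : padovan (Z.of_nat k) = fst (fst (padF k)).
Proof.
  unfold padovan. rewrite Nat2Z.id.
  replace (0 <=? Z.of_nat k) with true by (symmetry; apply Z.leb_le; lia).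
  reflexivity.
Qed.

Lemma padB_window (k : nat) :
  padB k = (padovan (- Z.of_nat k), padovan (- Z.of_nat k + 1), padovan (- Z.of_nat k + 2)).
Proof.
  induction k as [|k IH]; [reflexivity|].
  assert (P_neg : padovan (- Z.of_nat (S k)) = fst (fst (padB (S k)))).
  { unfold padovan.
    replace (0 <=? - Z.of_nat (S k)) with false by (symmetry; apply Z.leb_gt; lia).
    now rewrite Z.opp_involutive, Nat2Z.id. }
  rewrite P_neg.
  replace (- Z.of_nat (S k) + 1) with (- Z.of_nat k) by lia.
  replace (- Z.of_nat (S k) + 2) with (- Z.of_nat k + 1) by lia.
  simpl padB. rewrite IH. reflexivity.
Qed.

Lemma padovan_rec (n : Z) : padovan (n + 3) = padovan (n + 1) + padovan n.
Proof.
  destruct (Z_lt_le_dec n 0) as [n_neg | n_nonneg].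
  - pose proof (padB_window (S (Z.to_nat (- n - 1)))) as W.
    replace (- Z.of_nat (S (Z.to_nat (- n - 1)))) with n in W by lia.
    simpl padB in W. rewrite padB_window in W.
    replace (- Z.of_nat (Z.to_nat (- n - 1))) with (n + 1) in W by lia.
    replace (n + 1 + 2) with (n + 3) in W by lia.
    injection W. lia.
  - rewrite <- (Z2Nat.id n n_nonneg).
    replace (Z.of_nat (Z.to_nat n) + 3) with (Z.of_nat (S (S (S (Z.to_nat n))))) by lia.
    replace (Z.of_nat (Z.to_nat n) + 1) with (Z.of_nat (S (Z.to_nat n))) by lia.
    rewrite !padovan_of_nat. simpl.
    destruct (padF (Z.to_nat n)) as [[p0 p1] p2]. simpl. ring.
Qed.

Lemma padovan_rec_at (n m k : Z) :
  n = k + 3 -> m = k + 1 -> padovan n = padovan m + padovan k.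
Proof. intros -> ->. apply padovan_rec. Qed.

Record Zth := mkZth { coef0 : Z; coef1 : Z; coef2 : Z }.

Definition Zth0 : Zth := mkZth 0 0 0.
Definition Zth1 : Zth := mkZth 1 0 0.
Definition Zth_of (k : Z) : Zth := mkZth k 0 0.

Definition Zth_add (x y : Zth) : Zth :=
  let (x0, x1, x2) := x in let (y0, y1, y2) := y in mkZth (x0 + y0) (x1 + y1) (x2 + y2).

Definition Zth_opp (x : Zth) : Zth :=
  let (x0, x1, x2) := x in mkZth (- x0) (- x1) (- x2).

Definition Zth_sub (x y : Zth) : Zth := Zth_add x (Zth_opp y).

(* Reduction of the product with θ^3 = 1 + θ and θ^4 = θ + θ^2. *)
Definition Zth_mul (x y : Zth) : Zth :=
  let (x0, x1, x2) := x in let (y0, y1, y2) := y in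
  mkZth (x0 * y0 + (x1 * y2 + x2 * y1))
        (x0 * y1 + x1 * y0 + (x1 * y2 + x2 * y1) + x2 * y2)
        (x0 * y2 + x1 * y1 + x2 * y0 + x2 * y2).

Declare Scope Zth_scope.
Delimit Scope Zth_scope with th.
Infix "+" := Zth_add : Zth_scope.
Infix "-" := Zth_sub : Zth_scope.
Infix "*" := Zth_mul : Zth_scope.
Notation "- x" := (Zth_opp x) : Zth_scope.
Notation "1" := Zth1 : Zth_scope.

(* Trace, norm and adjugate of the multiplication-by-x map, whose matrix in the
   basis 1, θ, θ^2 has columns (x0, x1, x2), (x2, x0 + x2, x1), (x1, x1 + x2, x0 + x2). *)
Definition Zth_trace (x : Zth) : Z :=
  let (x0, _, x2) := x in 3 * x0 + 2 * x2.

Definition Zth_norm (x : Zth) : Z :=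
  let (x0, x1, x2) := x in
  x0 ^ 3 + x1 ^ 3 + x2 ^ 3 + 2 * x0 ^ 2 * x2 + x0 * x2 ^ 2
  - x0 * x1 ^ 2 - x1 * x2 ^ 2 - 3 * x0 * x1 * x2.

Definition Zth_adj (x : Zth) : Zth :=
  let (x0, x1, x2) := x in
  mkZth ((x0 + x2) ^ 2 - x1 * (x1 + x2)) (x2 ^ 2 - x0 * x1) (x1 ^ 2 - x2 * (x0 + x2)).

Ltac Zth_expand :=
  cbv beta iota delta [Zth0 Zth1 Zth_of Zth_add Zth_opp Zth_sub Zth_mul
                       Zth_trace Zth_norm Zth_adj coef0 coef1 coef2].

Lemma Zth_ring_theory : ring_theory Zth0 Zth1 Zth_add Zth_mul Zth_sub Zth_opp eq.
Proof.
  split; intros;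
    repeat match goal with x : Zth |- _ => destruct x end;
    Zth_expand; f_equal; ring.
Qed.

Add Ring Zth_ring : Zth_ring_theory.

Lemma Zth_mul_adj (x : Zth) : (x * Zth_adj x)%th = Zth_of (Zth_norm x).
Proof. destruct x; Zth_expand; f_equal; ring. Qed.

Lemma Zth_norm_mul (x y : Zth) : Zth_norm (x * y)%th = Zth_norm x * Zth_norm y.
Proof. destruct x, y; Zth_expand; ring. Qed.

Lemma Zth_cayley_hamilton (x : Zth) :
  (x * x * x = Zth_of (Zth_trace x) * (x * x) - Zth_of (Zth_trace (Zth_adj x)) * x
               + Zth_of (Zth_norm x))%th.
Proof. destruct x; Zth_expand; f_equal; ring. Qed.

Definition theta_pow (n : Z) : Zth :=
  mkZth (padovan (n - 5)) (padovan (n - 3)) (padovan (n - 4)).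

Definition coef_sum (x : Zth) : Z := coef0 x + coef1 x + coef2 x.

Lemma coef_sum_add (x y : Zth) : coef_sum (x + y)%th = coef_sum x + coef_sum y.
Proof. destruct x, y; unfold coef_sum; Zth_expand; ring. Qed.

Lemma coef_sum_scale (k : Z) (x : Zth) : coef_sum (Zth_of k * x)%th = k * coef_sum x.
Proof. destruct x; unfold coef_sum; Zth_expand; ring. Qed.

Lemma coef_sum_theta_pow (n : Z) : coef_sum (theta_pow n) = padovan n.
Proof.
  unfold coef_sum, theta_pow; simpl.
  rewrite (padovan_rec_at n (n - 2) (n - 3)), (padovan_rec_at (n - 2) (n - 4) (n - 5))
    by ring.
  ring.
Qed.

Lemma theta_pow_succ (n : Z) : theta_pow (n + 1) = (theta_pow n * theta_pow 1)%th.
Proof.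
  change (theta_pow 1) with (mkZth 0 1 0).
  unfold theta_pow. Zth_expand.
  rewrite (padovan_rec_at (n + 1 - 3) (n - 4) (n - 5)) by ring.
  replace (n + 1 - 5) with (n - 4) by ring.
  replace (n + 1 - 4) with (n - 3) by ring.
  f_equal; ring.
Qed.

Lemma theta_pow_add (m n : Z) : theta_pow (m + n) = (theta_pow m * theta_pow n)%th.
Proof.
  revert n. induction m as [|m IH|m IH] using Z.peano_ind; intros n.
  - change (theta_pow 0) with Zth1. rewrite Z.add_0_l. ring.
  - replace (Z.succ m + n) with (m + n + 1) by ring.
    rewrite theta_pow_succ, IH, <- Z.add_1_r, theta_pow_succ. ring.
  - assert (Em : theta_pow m = (theta_pow (Z.pred m) * theta_pow 1)%th).
    { rewrite <- theta_pow_succ. f_equal. lia. }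
    assert (En : theta_pow n = (theta_pow (n - 1) * theta_pow 1)%th).
    { rewrite <- theta_pow_succ. f_equal. ring. }
    replace (Z.pred m + n) with (m + (n - 1)) by lia.
    rewrite IH, Em, En. ring.
Qed.

Lemma trace_theta_pow (a : Z) : Zth_trace (theta_pow a) = rho a.
Proof.
  unfold rho, theta_pow. Zth_expand.
  rewrite (padovan_rec_at (a - 2) (a - 4) (a - 5)) by ring.
  ring.
Qed.

Lemma norm_theta_pow (a : Z) : Zth_norm (theta_pow a) = 1.
Proof.
  induction a as [|a IH|a IH] using Z.peano_ind; [reflexivity| |].
  - rewrite <- Z.add_1_r, theta_pow_succ, Zth_norm_mul, IH. reflexivity.
  - rewrite <- (Z.succ_pred a), <- Z.add_1_r, theta_pow_succ, Zth_norm_mul in IH.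
    change (Zth_norm (theta_pow 1)) with 1 in IH. lia.
Qed.

Lemma adj_theta_pow (a : Z) : Zth_adj (theta_pow a) = theta_pow (- a).
Proof.
  assert (Inv : (theta_pow a * theta_pow (- a))%th = Zth1).
  { rewrite <- theta_pow_add, Z.add_opp_diag_r. reflexivity. }
  transitivity (Zth_adj (theta_pow a) * (theta_pow a * theta_pow (- a)))%th.
  - rewrite Inv. ring.
  - replace (Zth_adj (theta_pow a) * (theta_pow a * theta_pow (- a)))%th
      with (theta_pow a * Zth_adj (theta_pow a) * theta_pow (- a))%th by ring.
    rewrite Zth_mul_adj, norm_theta_pow. change (Zth_of 1) with Zth1. ring.
Qed.

Lemma theta_pow_cubic (a : Z) :
  (theta_pow (3 * a) = Zth_of (rho a) * theta_pow (2 * a) + Zth_of (sigma a) * theta_pow a + 1)%th.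
Proof.
  replace (3 * a) with (a + a + a) by ring. replace (2 * a) with (a + a) by ring.
  rewrite !theta_pow_add, Zth_cayley_hamilton, adj_theta_pow, !trace_theta_pow, norm_theta_pow.
  change (Zth_of (sigma a)) with (- Zth_of (rho (- a)))%th. change (Zth_of 1) with Zth1.
  ring.
Qed.

Lemma theta_pow_shift_identity (a n : Z) :
  (theta_pow n = Zth_of (rho a) * theta_pow (n - a) + Zth_of (sigma a) * theta_pow (n - 2 * a)
                 + theta_pow (n - 3 * a))%th.
Proof.
  replace (theta_pow n) with (theta_pow (n - 3 * a) * theta_pow (3 * a))%th
    by (rewrite <- theta_pow_add; f_equal; ring).
  replace (theta_pow (n - a)) with (theta_pow (n - 3 * a) * theta_pow (2 * a))%th
    by (rewrite <- theta_pow_add; f_equal; ring).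
  replace (theta_pow (n - 2 * a)) with (theta_pow (n - 3 * a) * theta_pow a)%th
    by (rewrite <- theta_pow_add; f_equal; ring).
  rewrite theta_pow_cubic. ring.
Qed.

Theorem theorem3p1 : forall a n : Z, a < n ->
  padovan n = rho a * padovan (n - a) + sigma a * padovan (n - 2 * a) + padovan (n - 3 * a).
Proof.
  intros a n _.
  rewrite <- !coef_sum_theta_pow, (theta_pow_shift_identity a n), !coef_sum_add, !coef_sum_scale.
  reflexivity.
Qed.
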